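(* Let $N\ge 1$ be an integer, let $\Gamma$ be (the image in $\mathrm{PSL}_2(\mathbf{Z})$ of) $\Gamma_0(N)$, and let $c$ be the complex conjugation $c(z)=1/(N\bar z)$ of the upper half-plane. Then $(\Gamma,c)$ is a real Fuchsian group, and for every $\gamma\in\Gamma$ admissible with respect to $c$, the locus $C_\gamma$ contains a cusp if and only if $N$ is a perfect square.
   Context: $\mathfrak{h}$ is the upper half-plane; $\Gamma_0(N)$ is the group of matrices in $\mathrm{SL}_2(\mathbf{Z})$ with lower-left entry divisible by $N$; its cusps are the points of $\mathbf{Q}\mathbf{P}^1$ and $\mathfrak{h}^*=\mathfrak{h}\cup\mathbf{Q}\mathbf{P}^1$. For $\gamma\in\mathrm{PSL}_2(\mathbf{R})$, $\gamma^c=c\gamma c$; here $c=c_0\tau$ with $c_0(x+iy)=-x+iy$ and $\tau=\begin{pmatrix}0&-1/\sqrt N\\ \sqrt N&0\end{pmatrix}$, which normalizes $\Gamma_0(N)$, so $\Gamma^c=\Gamma$. An element $\gamma\in\Gamma$ is admissible if $\gamma^c=\gamma^{-1}$ (equivalently, $\gamma=\begin{pmatrix}a&b\\c'&d\end{pmatrix}$ with $c'=-Nb$). $C_\gamma=\{z\in\mathfrak{h}^*:\gamma z=cz\}$, where $c$ is extended to $\mathbf{R}\mathbf{P}^1$ by the same formula. *)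

From HB Require Import structures.
From mathcomp Require Import all_boot all_order all_algebra.
From mathcomp Require Import complex reals.
Set Implicit Arguments. Unset Strict Implicit. Unset Printing Implicit Defensive.
Import Order.TTheory GRing.Theory Num.Theory.
Local Open Scope ring_scope.
Local Open Scope complex_scope.

Section Defs.
Variable R : realType.

Definition hpl (z : R[i]) : Prop := 0 < Im z.

Definition mob (a b c d : int) (z : R[i]) : R[i] :=
  (a%:~R * z + b%:~R) / (c%:~R * z + d%:~R).

Definition cconj (N : nat) (z : R[i]) : R[i] := 1 / (N%:R * z^*).

(* RP^1 = R u {oo}, with None = oo *)
Definition mobP (a b c d : int) (p : option R) : option R :=
  match p with
  | None => if c == 0 then None else Some (a%:~R / c%:~R)
  | Some x => if c%:~R * x + d%:~R == 0 then None
              else Some ((a%:~R * x + b%:~R) / (c%:~R * x + d%:~R))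
  end.

Definition cconjP (N : nat) (p : option R) : option R :=
  match p with
  | None => Some 0
  | Some x => if x == 0 then None else Some (1 / (N%:R * x))
  end.

(* the cusps QP^1 embedded in RP^1 *)
Definition cusp_pt (q : option rat) : option R :=
  match q with None => None | Some r => Some (ratr r) end.

Definition inGamma0 (N : nat) (a b c d : int) : Prop :=
  a * d - b * c = 1 /\ (N%:Z %| c)%Z.

(* gamma^c = c gamma c equals gamma^{-1} = [[d,-b],[-c,a]] as maps of h
   (equality in PSL_2(R), which acts faithfully on h) *)
Definition admissible (N : nat) (a b c d : int) : Prop :=
  forall z, hpl z -> cconj N (mob a b c d (cconj N z)) = mob d (- b) (- c) a z.

Definition C_has_cusp (N : nat) (a b c d : int) : Prop :=
  exists q : option rat, mobP a b c d (cusp_pt q) = cconjP N (cusp_pt q).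

Definition real_fuchsian (N : nat) : Prop :=
  (forall z, hpl z -> hpl (cconj N z)) /\
  (forall z, hpl z -> cconj N (cconj N z) = z) /\
  (forall a b c d, inGamma0 N a b c d ->
     exists a' b' c' d', inGamma0 N a' b' c' d' /\
       forall z, hpl z -> cconj N (mob a b c d (cconj N z)) = mob a' b' c' d' z).

End Defs.

From HB Require Import structures.
From mathcomp Require Import all_boot all_order all_algebra.
From mathcomp Require Import complex reals.
From mathcomp Require Import ring lra zify.
Set Implicit Arguments. Unset Strict Implicit. Unset Printing Implicit Defensive.
Import Order.TTheory GRing.Theory Num.Theory.
Local Open Scope ring_scope.
Local Open Scope complex_scope.

(* For gamma = [[a, b], [kN, d]] one computes c gamma c = [[d, k], [bN, a]], again in
   Gamma_0(N), so (Gamma, c) is a real Fuchsian group.  Comparing c gamma c with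
   gamma^-1 = [[d, -b], [-kN, a]] at the points it of the imaginary axis forces k = -b,
   so gamma = [[a, b], [-bN, d]] with ad + Nb^2 = 1.  A real x <> 0 lies on C_gamma iff
   Nx(ax + b) = -bNx + d, and by the determinant condition
     (Nax + Nb)^2 - N = Na (Nx(ax + b) + bNx - d).
   Hence a rational point of C_gamma gives a rational, thus integral, square root of N;
   conversely if N = m^2 and a <> 0, the point (+-m - Nb)/(Na) lies on C_gamma.  The
   cusps 0 and oo lie on C_gamma only when ad = 0, which forces Nb^2 = 1, hence N = 1;
   for a = 0 the cusp oo does lie on C_gamma. *)

Lemma unimodular_neq0 (S : nzRingType) (x y u v : S) :
  x * y - u * v = 1 -> (u != 0) || (x != 0).
Proof.
apply: contra_eqT; rewrite negb_or !negbK => /andP[/eqP-> /eqP->].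
by rewrite !mul0r subrr eq_sym oner_eq0.
Qed.

Section ConjugationAction.
Variables (R : realType) (N : nat).
Hypothesis N_gt0 : (0 < N)%N.

Lemma hplE (z : R[i]) : hpl z <-> 0 < complex.Im z.
Proof. by rewrite /hpl -complexIm -[0 : R[i]]/((0 : R)%:C) ltcR. Qed.

Lemma hpl_neq0 (z : R[i]) : hpl z -> z != 0.
Proof.
case: z => x y; rewrite hplE /= => y_gt0.
by apply/eqP => -[_ y0]; rewrite y0 ltxx in y_gt0.
Qed.

Lemma hpl_cconj (z : R[i]) : hpl z -> hpl (cconj N z).
Proof.
case: z => x y; rewrite !hplE /cconj /= => y_gt0.
have -> : (N%:R : R[i]) = (N%:R : R) +i* 0 by rewrite complexr0 rmorph_nat.
simpc => /=.
have N_gt0R : 0 < (N%:R : R) by rewrite ltr0n.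
apply: divr_gt0; first by rewrite mulr_gt0.
by rewrite sqrrN ltr_wpDl ?sqr_ge0 // exprn_gt0 // mulr_gt0.
Qed.

Lemma cconjK (z : R[i]) : hpl z -> cconj N (cconj N z) = z.
Proof.
move=> /hpl_neq0 z_neq0; have N_neq0 : (N%:R : R[i]) != 0 by rewrite pnatr_eq0 -lt0n.
rewrite /cconj fmorph_div rmorph1 rmorphM rmorph_nat /= conjCK.
by field; rewrite z_neq0 N_neq0.
Qed.

Lemma cconj_mob (a b k d : int) (z : R[i]) : z != 0 ->
  cconj N (mob a b (k * N%:Z) d (cconj N z)) = mob d k (b * N%:Z) a z.
Proof.
move=> z_neq0; have N_neq0 : (N%:R : R[i]) != 0 by rewrite pnatr_eq0 -lt0n.
rewrite /cconj /mob fmorph_div !rmorphD !rmorphM !rmorph_int rmorph1 /= !mul1r.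
rewrite fmorphV rmorphM rmorph_nat /= conjCK -[(N%:Z)%:~R]/(N%:R : R[i]).
have -> : k%:~R * N%:R * (N%:R * z)^-1 + d%:~R = (d%:~R * z + k%:~R) / z.
  by field; rewrite z_neq0 N_neq0.
rewrite mulrA.
have -> : N%:R * (a%:~R * (N%:R * z)^-1 + b%:~R) = (b%:~R * N%:R * z + a%:~R) / z.
  by field; rewrite z_neq0 N_neq0.
by rewrite invf_div invf_div mulrA divfK.
Qed.

Lemma real_fuchsian_Gamma0 : real_fuchsian R N.
Proof.
split; [exact: hpl_cconj | split; first exact: cconjK].
move=> a b c d [det /dvdzP[k c_eq]]; subst c.
exists d, k, (b * N%:Z), a; split.
  by split; [rewrite -det; ring | exact: dvdz_mull].
by move=> z /hpl_neq0; apply: cconj_mob.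
Qed.

Lemma intr_complex (n : int) : (n%:~R : R[i]) = (n%:~R : R) +i* 0.
Proof. by rewrite complexr0 rmorph_int. Qed.

Lemma mob_denom_neq0 (c d : int) (z : R[i]) : hpl z -> (c != 0) || (d != 0) ->
  c%:~R * z + d%:~R != 0.
Proof.
case: z => x y; rewrite hplE /= => y_gt0 cd_neq0.
rewrite !intr_complex; simpc; apply/eqP => -[cx_d cy].
have c0 : c = 0 by move/eqP: cy; rewrite mulf_eq0 (gt_eqF y_gt0) orbF intr_eq0 => /eqP.
move: cx_d cd_neq0; rewrite c0 mul0r add0r => /eqP; rewrite intr_eq0 => /eqP ->.
by rewrite eqxx.
Qed.

Lemma admissible_imaginary_axis (a b k d : int) (t : R) :
  a * d - b * (k * N%:Z) = 1 -> admissible R N a b (k * N%:Z) d -> 0 < t ->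
  ((k + b) * a)%:~R + ((k + b) * d * N%:Z)%:~R * t ^+ 2 = 0 :> R.
Proof.
move=> det adm t_gt0; have it_hpl : hpl (0 +i* t) by rewrite hplE.
have denl : (b * N%:Z)%:~R * (0 +i* t) + a%:~R != 0.
  by apply: mob_denom_neq0 => //; apply: (@unimodular_neq0 _ _ d _ k); rewrite -det; ring.
have denr : (- (k * N%:Z))%:~R * (0 +i* t) + a%:~R != 0.
  by apply: mob_denom_neq0 => //; apply: (@unimodular_neq0 _ _ d _ (- b)); rewrite -det; ring.
have := adm _ it_hpl; rewrite cconj_mob ?hpl_neq0 // /mob => /eqP.
rewrite eqr_div // !intr_complex; simpc => /eqP[re _].
by move: re; rewrite !(intrM, intrD, intrN) => re; lra.
Qed.

Lemma admissible_lower_left (a b k d : int) :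
  a * d - b * (k * N%:Z) = 1 -> admissible R N a b (k * N%:Z) d -> k = - b.
Proof.
move=> det adm.
have at1 := admissible_imaginary_axis det adm ltr01.
have at2 := admissible_imaginary_axis det adm (ltr0Sn R 1).
have kb_a : (k + b) * a = 0 by apply/eqP; rewrite -(intr_eq0 R); apply/eqP; lra.
have kb_dN : (k + b) * d * N%:Z = 0 by apply/eqP; rewrite -(intr_eq0 R); apply/eqP; lra.
have [/eqP|kb_neq0] := eqVneq (k + b) 0; first by rewrite addr_eq0 => /eqP.
have a0 : a = 0 by move/eqP: kb_a; rewrite mulf_eq0 (negbTE kb_neq0) => /eqP.
have d0 : d = 0.
  by move/eqP: kb_dN; rewrite !mulf_eq0 (negbTE kb_neq0) /= => /orP[/eqP | /eqP]; lia.
have bkN : (- b * k) * N%:Z = 1 by rewrite -det a0 d0; ring.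
have N1 : N = 1%N by move/(congr1 absz)/eqP: bkN; rewrite abszM muln_eq1 => /andP[_ /eqP].
(* the inverse of a unit of [int] is the unit itself, definitionally *)
by move: bkN; rewrite N1 mulr1 => /mulr1_eq <-.
Qed.

End ConjugationAction.

Lemma rat_sqr_natr (n : nat) (s : rat) : s ^+ 2 = n%:R -> exists m : nat, n = (m ^ 2)%N.
Proof.
move=> s2n.
have num2 : numq s ^+ 2 = n%:Z * denq s ^+ 2.
  apply: (@intr_inj rat); rewrite rmorphXn rmorphM rmorphXn /=.
  by rewrite -[(n%:Z)%:~R]/(n%:R : rat) -s2n -exprMn numqE.
have num2N : (`|numq s| ^ 2 = n * `|denq s| ^ 2)%N.
  by rewrite -abszX num2 abszM abszX.
have den_coprime : coprime `|denq s| (`|numq s| ^ 2).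
  by apply: coprimeXr; rewrite coprime_sym coprime_num_den.
have : (`|denq s| %| `|numq s| ^ 2)%N by rewrite num2N (expnS _ 1) mulnCA dvdn_mulr.
move/gcdn_idPl; move/eqP: den_coprime => -> den1.
by exists `|numq s|%N; rewrite num2N -den1 muln1.
Qed.

Section Cusps.
Variables (R : realType) (N : nat) (a b d : int).
Hypothesis N_gt0 : (0 < N)%N.
Hypothesis det : a * d + b ^+ 2 * N%:Z = 1.

Lemma N_eq1_of_ad0 : a * d = 0 -> N = 1%N.
Proof.
move=> ad0; move: det; rewrite ad0 add0r.
by move/(congr1 absz)/eqP; rewrite abszM muln_eq1 => /andP[_ /eqP].
Qed.

Lemma C_pointE (x : R) : x != 0 ->
  mobP a b (- b * N%:Z) d (Some x) = cconjP N (Some x) <->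
  N%:R * x * (a%:~R * x + b%:~R) = (- b * N%:Z)%:~R * x + d%:~R.
Proof.
move=> x_neq0; rewrite /= (negbTE x_neq0).
have N_neq0 : (N%:R : R) != 0 by rewrite pnatr_eq0 -lt0n.
have detR : a%:~R * ((- b * N%:Z)%:~R * x + d%:~R)
            - (- b * N%:Z)%:~R * (a%:~R * x + b%:~R) = 1 :> R.
  by rewrite -[RHS](congr1 intr det) !(intrD, intrM, intrN, rmorphXn); ring.
case: ifP => [/eqP D0 | /negbT D_neq0].
  split=> // ND.
  have axb0 : a%:~R * x + b%:~R = 0.
    by move/eqP: ND; rewrite D0 !mulf_eq0 (negbTE N_neq0) (negbTE x_neq0) => /eqP.
  by move/eqP: detR; rewrite D0 axb0 !mulr0 subr0 eq_sym oner_eq0.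
transitivity ((a%:~R * x + b%:~R) / ((- b * N%:Z)%:~R * x + d%:~R) == 1 / (N%:R * x)).
  by split=> [[->] | /eqP ->].
by rewrite eqr_div ?mulf_neq0 // mul1r mulrC; split=> /eqP.
Qed.

Lemma C_point_quadratic (x : R) :
  (N%:R * a%:~R * x + N%:R * b%:~R) ^+ 2 - N%:R
  = N%:R * a%:~R * (N%:R * x * (a%:~R * x + b%:~R) - ((- b * N%:Z)%:~R * x + d%:~R)).
Proof.
have detR : a%:~R * d%:~R + b%:~R ^+ 2 * N%:R = 1 :> R.
  rewrite -[RHS](congr1 intr det) intrD !intrM -[(N%:Z)%:~R]/(N%:R : R); ring.
transitivity ((N%:R * a%:~R * x + N%:R * b%:~R) ^+ 2
               - N%:R * (a%:~R * d%:~R + b%:~R ^+ 2 * N%:R)); first by rewrite detR mulr1.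
rewrite intrM intrN -[(N%:Z)%:~R]/(N%:R : R); ring.
Qed.

Lemma C_has_cusp_sqr : C_has_cusp R N a b (- b * N%:Z) d -> exists m : nat, N = (m ^ 2)%N.
Proof.
have N1_sqr : N = 1%N -> exists m : nat, N = (m ^ 2)%N by move->; exists 1%N.
case=> -[r|]; last first.
  rewrite /=; case: ifP => // /negbT c_neq0 [/eqP].
  rewrite mulf_eq0 invr_eq0 !intr_eq0 (negbTE c_neq0) orbF => /eqP a0.
  by apply/N1_sqr/N_eq1_of_ad0; rewrite a0 mul0r.
have [x0 | x_neq0] := eqVneq (ratr r : R) 0.
  rewrite /= x0 eqxx mulr0 add0r; case: ifP => // + _; rewrite intr_eq0 => /eqP d0.
  by apply/N1_sqr/N_eq1_of_ad0; rewrite d0 mulr0.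
move/(C_pointE x_neq0) => fixed.
have sqrR : (N%:R * a%:~R * ratr r + N%:R * b%:~R) ^+ 2 = N%:R :> R.
  by apply/eqP; rewrite -subr_eq0 C_point_quadratic fixed subrr mulr0.
apply: (@rat_sqr_natr _ (N%:R * a%:~R * r + N%:R * b%:~R)).
apply: (fmorph_inj (ratr : {rmorphism rat -> R})).
by rewrite rmorphXn rmorphD !rmorphM !rmorph_int !rmorph_nat.
Qed.

Lemma C_has_cusp_of_sqr (m : nat) : N = (m ^ 2)%N -> C_has_cusp R N a b (- b * N%:Z) d.
Proof.
move=> N_sqr; have [a0 | a_neq0] := eqVneq a 0.
  have b_neq0 : b != 0 by apply/eqP => b0; move: det; rewrite a0 b0; lia.
  have c_neq0 : - b * N%:Z != 0 by rewrite mulf_neq0 ?oppr_eq0 //; lia.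
  by exists None => /=; rewrite (negbTE c_neq0) a0 mul0r.
have [s s2 s_neq] : exists2 s : int, s ^+ 2 = N%:Z & s != N%:Z * b.
  have m2 : m%:Z ^+ 2 = N%:Z by rewrite N_sqr; lia.
  have [mNb | mNb] := eqVneq (m%:Z) (N%:Z * b); last by exists m%:Z.
  exists (- m%:Z); rewrite ?sqrrN // -mNb; move: N_gt0; rewrite N_sqr; lia.
pose q : rat := (s - N%:Z * b)%:~R / (N%:Z * a)%:~R.
have Na_neq0 : (N%:R * a%:~R : R) != 0 by rewrite mulf_neq0 ?intr_eq0 // pnatr_eq0 -lt0n.
have qE : ratr q = (s%:~R - N%:R * b%:~R) / (N%:R * a%:~R) :> R.
  by rewrite /q fmorph_div !rmorph_int intrB !intrM.
have q_neq0 : ratr q != 0 :> R.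
  by rewrite qE mulf_neq0 ?invr_eq0 // subr_eq0 -[N%:R]/((N%:Z)%:~R : R) -intrM eqr_int.
have Nq : N%:R * a%:~R * ratr q + N%:R * b%:~R = s%:~R :> R.
  by rewrite qE mulrC divfK // subrK.
exists (Some q); apply/(C_pointE q_neq0).
have := C_point_quadratic (ratr q).
rewrite Nq -rmorphXn s2 subrr => /esym/eqP.
by rewrite mulf_eq0 (negbTE Na_neq0) subr_eq0 => /eqP.
Qed.

End Cusps.

Theorem proposition6p5 (R : realType) (N : nat) :
  (0 < N)%N ->
  real_fuchsian R N /\
  (forall a b c d : int, inGamma0 N a b c d -> admissible R N a b c d ->
     (C_has_cusp R N a b c d <-> exists m : nat, N = (m ^ 2)%N)).
Proof.
move=> N_gt0; split; first exact: real_fuchsian_Gamma0.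
move=> a b c d [det /dvdzP[k c_eq]]; subst c => adm.
have k_eq : k = - b := admissible_lower_left N_gt0 det adm.
have det_b : a * d + b ^+ 2 * N%:Z = 1 by rewrite -det k_eq; ring.
rewrite k_eq; split; first exact: C_has_cusp_sqr.
by case=> m; apply: C_has_cusp_of_sqr.
Qed.
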